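(* Let $N$ be a society, $\nabla$ an ES basic fusion operator with representing basic assignment $\Phi\mapsto\succeq_\Phi$, and $D$ an $N$-coalition. The following are equivalent: (i) $D$ is a decisive $N$-coalition with respect to $\nabla$; (ii) for every $N$-profile $\Phi$ and all $E,E'\in\mathcal E$ with $|[\![B(E)]\!]|\le2$, if $B(\nabla(E_i,E))\wedge B(E')\vdash\bot$ for all $i\in D$ then $B(\nabla(\Phi,E))\wedge B(E')\vdash\bot$; (iii) for every $N$-profile $\Phi$ and all interpretations $w,w'$, if $w\succ_{E_i}w'$ for all $i\in D$ then $w\succ_\Phi w'$.
   Context: Setting: epistemic space $(\mathcal E,B,\mathcal L_{\mathcal P})$ ($\mathcal E$ nonempty, $B:\mathcal E\to$ propositional formulas over finite $\mathcal P$, image modulo equivalence exactly the consistent formulas; $\mathcal W_{\mathcal P}$ valuations, $[\![\phi]\!]$ models); agents: well-ordered set $\mathcal S$; society: nonempty finite $N\subseteq\mathcal S$; $N$-profile $\Phi:N\to\mathcal E$, $E_i=\Phi(i)$, identified with $E_i$ if $N=\{i\}$; profiles on $\{i_1<\dots<i_n\}$, $\{j_1<\dots<j_m\}$ equivalent if $n=m$ and entries coincide position-wise. ES basic fusion operator: a map $\nabla(\Phi,E)\in\mathcal E$ with (ESF1) $B(\nabla(\Phi,E))\vdash B(E)$; (ESF2) equivalent profiles and $B(E)\equiv B(E')$ give equivalent $B(\nabla)$; (ESF3) if $B(E)\equiv B(E')\wedge B(E'')$ then $B(\nabla(\Phi,E'))\wedge B(E'')\vdash B(\nabla(\Phi,E))$;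 (ESF4) if moreover $B(\nabla(\Phi,E'))\wedge B(E'')\nvdash\bot$ then $B(\nabla(\Phi,E))\vdash B(\nabla(\Phi,E'))\wedge B(E'')$. Representing basic assignment: the unique $\Phi\mapsto\succeq_\Phi$ (total preorders on $\mathcal W_{\mathcal P}$, $\succ$ strict part, equal on equivalent profiles) with $[\![B(\nabla(\Phi,E))]\!]=\max([\![B(E)]\!],\succeq_\Phi)$. An $N$-coalition is a subset $D\subseteq N$; $D$ is decisive for $E$ against $E'$ if for every $N$-profile $\Phi$ with $B(\nabla(E_i,E))\wedge B(E')\vdash\bot$ for all $i\in D$ and $\bigwedge_{i\in D}B(\nabla(E_i,E))\nvdash\bot$ (empty conjunction is $\top$), we have $B(\nabla(\Phi,E))\wedge B(E')\vdash\bot$; $D$ is a decisive $N$-coalition if this holds for all $E,E'$. *)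

From HB Require Import structures.
From mathcomp Require Import all_boot all_order.
Set Implicit Arguments. Unset Strict Implicit. Unset Printing Implicit Defensive.
Import Order.TTheory.
Local Open Scope order_scope.

Inductive form (P : Type) : Type :=
| FVar of P | FTop | FBot | FNeg of form P
| FAnd of form P & form P | FOr of form P & form P | FImp of form P & form P.
Arguments FTop {P}. Arguments FBot {P}.

Definition valuation (P : finType) := {ffun P -> bool}.

Fixpoint sat (P : finType) (w : valuation P) (f : form P) : bool :=
  match f with
  | FVar p => w p
  | FTop => true
  | FBot => false
  | FNeg g => ~~ sat w g
  | FAnd g h => sat w g && sat w h
  | FOr g h => sat w g || sat w h
  | FImp g h => sat w g ==> sat w h
  end.

Definition models (P : finType) (f : form P) : {set valuation P} :=
  [set w | sat w f].

Definition entails (P : finType) (f g : form P) : Prop :=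
  forall w : valuation P, sat w f -> sat w g.
Definition fequiv (P : finType) (f g : form P) : Prop :=
  entails f g /\ entails g f.
Definition consistent (P : finType) (f : form P) : Prop := ~ entails f FBot.

Definition bigAnd (P : finType) (fs : seq (form P)) : form P :=
  foldr (@FAnd P) FTop fs.

Definition epistemic_space (P : finType) (E : Type) (B : E -> form P) : Prop :=
  (forall e, consistent (B e)) /\
  (forall f : form P, consistent f -> exists e, fequiv (B e) f).

(** Societies: nonempty finite subsets of the well-ordered set S of agents,
    represented as strictly increasing nonempty lists. *)
Definition society d (S : orderType d) (N : seq S) : Prop :=
  sorted <%O N /\ N <> [::].

(** A profile on society N is given by N together with Phi : S -> E
    (only the values on N matter); E_i = Phi i. *)
Definition equiv_profiles d (S : orderType d) (E : Type)
  (N : seq S) (Phi : S -> E) (M : seq S) (Psi : S -> E) : Prop :=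
  map Phi N = map Psi M.

(** ES basic fusion operator: nabla N Phi e = nabla(Phi, e) for the N-profile Phi. *)
Definition ES_basic_fusion d (S : orderType d) (P : finType) (E : Type)
  (B : E -> form P) (nabla : seq S -> (S -> E) -> E -> E) : Prop :=
  (forall N Phi e, society N -> entails (B (nabla N Phi e)) (B e)) /\
  (forall N M Phi Psi e e', society N -> society M ->
     equiv_profiles N Phi M Psi -> fequiv (B e) (B e') ->
     fequiv (B (nabla N Phi e)) (B (nabla M Psi e'))) /\
  (forall N Phi e e' e'', society N ->
     fequiv (B e) (FAnd (B e') (B e'')) ->
     entails (FAnd (B (nabla N Phi e')) (B e'')) (B (nabla N Phi e))) /\
  (forall N Phi e e' e'', society N ->
     fequiv (B e) (FAnd (B e') (B e'')) ->
     consistent (FAnd (B (nabla N Phi e')) (B e'')) ->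
     entails (B (nabla N Phi e)) (FAnd (B (nabla N Phi e')) (B e''))).

Definition total_preorder (T : Type) (R : T -> T -> Prop) : Prop :=
  (forall x, R x x) /\ (forall x y z, R x y -> R y z -> R x z) /\
  (forall x y, R x y \/ R y x).

Definition strict (T : Type) (R : T -> T -> Prop) (x y : T) : Prop :=
  R x y /\ ~ R y x.

Definition in_max (P : finType) (f : form P) (R : valuation P -> valuation P -> Prop)
  (w : valuation P) : Prop :=
  sat w f /\ forall w', sat w' f -> R w w'.

Definition representing_assignment d (S : orderType d) (P : finType) (E : Type)
  (B : E -> form P) (nabla : seq S -> (S -> E) -> E -> E)
  (pre : seq S -> (S -> E) -> valuation P -> valuation P -> Prop) : Prop :=
  (forall N Phi, society N -> total_preorder (pre N Phi)) /\
  (forall N M Phi Psi, society N -> society M ->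
     equiv_profiles N Phi M Psi -> pre N Phi = pre M Psi) /\
  (forall N Phi e, society N ->
     forall w, sat w (B (nabla N Phi e)) <-> in_max (B e) (pre N Phi) w).

Definition coalition d (S : orderType d) (N D : seq S) : Prop := {subset D <= N}.

Definition decisive_for d (S : orderType d) (P : finType) (E : Type)
  (B : E -> form P) (nabla : seq S -> (S -> E) -> E -> E)
  (N D : seq S) (e e' : E) : Prop :=
  forall Phi : S -> E,
    (forall i, i \in D -> entails (FAnd (B (nabla [:: i] Phi e)) (B e')) FBot) ->
    consistent (bigAnd [seq B (nabla [:: i] Phi e) | i <- D]) ->
    entails (FAnd (B (nabla N Phi e)) (B e')) FBot.

Definition decisive d (S : orderType d) (P : finType) (E : Type)
  (B : E -> form P) (nabla : seq S -> (S -> E) -> E -> E) (N D : seq S) : Prop :=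
  forall e e' : E, decisive_for B nabla N D e e'.

From HB Require Import structures.
From mathcomp Require Import all_boot all_order.
Import Order.TTheory.
Set Implicit Arguments. Unset Strict Implicit.

(** Everything goes through the representing assignment: [nabla(Phi, e)] is
    the set of [>=_Phi]-maximal models of [B e].  (iii) => (i): a model [w0]
    of all the individual outcomes is strictly preferred by every member of
    [D] to any model [v] of [B e'], hence [w0 >_Phi v] and [v] is not in the
    collective outcome.  (ii) => (iii): take [B e] with models [{w, w'}] and
    [B e'] with the single model [w']; the individual outcomes avoid [w'],
    so the collective one does, i.e. [w >_Phi w'].  (i) => (ii): a model [v]
    of both the collective outcome and [B e'] is a model of [B e] missed by
    every individual outcome; as [B e] has at most two models, all the
    (nonempty) individual outcomes are the same singleton, so they are
    jointly consistent and decisiveness applies. *)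

Section Formulas.
Variable P : finType.
Implicit Types (f g : form P) (w v : valuation P).

Lemma sat_bigAnd w (fs : seq (form P)) : sat w (bigAnd fs) = all (sat w) fs.
Proof. by elim: fs => //= f fs ->. Qed.

Lemma consistentP f : reflect (consistent f) [exists w, sat w f].
Proof.
apply: (iffP idP) => [/existsP [w fw] /(_ w fw) // | fC].
apply: contraT => /existsPn noModel.
by case: fC => w; rewrite (negbTE (noModel w)).
Qed.

Lemma inconsistent_andP f g :
  entails (FAnd f g) FBot <-> (forall w, sat w f -> sat w g -> False).
Proof.
split=> [fg w fw gw | fg w /andP[fw gw]]; last by case: (fg w fw gw).
by have := fg w; rewrite /= fw gw => /(_ isT).
Qed.

Definition charf w : form P :=
  bigAnd [seq (if w p then FVar p else FNeg (FVar p)) | p <- enum P].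

Lemma sat_charf w v : sat v (charf w) = (v == w).
Proof.
rewrite /charf sat_bigAnd all_map.
apply/allP/eqP => [vw | -> p _ /=]; last by case wp: (w p) => /=; rewrite wp.
apply/ffunP => p; have := vw p (mem_enum _ p).
by case wp: (w p) => /=; rewrite wp // => /negbTE.
Qed.

Lemma card_le2_eq (A : {set valuation P}) v u u' :
  #|A| <= 2 -> v \in A -> u \in A -> u' \in A -> u != v -> u' != v -> u = u'.
Proof.
move=> A2 vA uA u'A uv u'v; apply/eqP/contraT => uu'.
suff : 3 <= #|A| by rewrite ltnNge A2.
apply: leq_trans (_ : #|v |: [set u; u']| <= #|A|).
  by rewrite cardsU1 cards2 !inE negb_or (eq_sym v u) (eq_sym v u') uv u'v uu'.
by apply: subset_leq_card; apply/subsetP => x; rewrite !inE => /orP[|/orP[]] /eqP ->.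
Qed.

End Formulas.

Section Maxima.
Variables (P : finType) (R : valuation P -> valuation P -> Prop).
Hypothesis R_total : total_preorder R.
Implicit Types (f : form P) (w v : valuation P).

Lemma strict_of_not_in_max f w v :
  in_max f R w -> sat v f -> ~ in_max f R v -> strict R w v.
Proof.
case: R_total => _ [R_trans _] [fw w_max] fv v_notmax.
split; first exact: w_max.
by move=> Rvw; apply: v_notmax; split=> // u fu; apply: R_trans Rvw (w_max u fu).
Qed.

Lemma in_max_pair f w w' :
  (forall v, sat v f = (v == w) || (v == w')) -> in_max f R w' <-> R w' w.
Proof.
case: R_total => R_refl _ fE; split=> [[_ w'_max] | Rw'w].
  by apply: w'_max; rewrite fE eqxx.
split=> [|u]; first by rewrite fE eqxx orbT.
by rewrite fE => /orP[] /eqP ->.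
Qed.

End Maxima.

Section EpistemicSpace.
Variables (P : finType) (E : Type) (B : E -> form P).
Hypothesis B_space : epistemic_space B.

Lemma epistemic_sat e : exists w, sat w (B e).
Proof. by case: B_space => /(_ e) /consistentP /existsP. Qed.

Lemma epistemic_realize (f : form P) w0 :
  sat w0 f -> exists e, forall v, sat v (B e) = sat v f.
Proof.
case: B_space => _ realize fw0.
have [e [Bf fB]] : exists e, fequiv (B e) f by apply: realize => /(_ w0 fw0).
by exists e => v; apply/idP/idP; [apply: Bf | apply: fB].
Qed.

End EpistemicSpace.

Lemma society1 d (S : orderType d) (i : S) : society [:: i].
Proof. by []. Qed.

Section Decisiveness.
Variables (d : Order.disp_t) (S : orderType d) (P : finType) (E : Type)
  (B : E -> form P) (nabla : seq S -> (S -> E) -> E -> E)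
  (pre : seq S -> (S -> E) -> valuation P -> valuation P -> Prop)
  (N D : seq S).
Hypotheses (B_space : epistemic_space B) (pre_rep : representing_assignment B nabla pre)
  (N_society : society N).

Lemma nabla_maxE M Phi e w : society M ->
  sat w (B (nabla M Phi e)) <-> in_max (B e) (pre M Phi) w.
Proof. by case: pre_rep => _ [_ maxE] /maxE; apply. Qed.

Lemma pre_total M Phi : society M -> total_preorder (pre M Phi).
Proof. by case: pre_rep => total _ /total. Qed.

Definition decisive_on_pairs : Prop :=
  forall (Phi : S -> E) (e e' : E), #|models (B e)| <= 2 ->
    (forall i, i \in D -> entails (FAnd (B (nabla [:: i] Phi e)) (B e')) FBot) ->
    entails (FAnd (B (nabla N Phi e)) (B e')) FBot.

Definition pareto_dominant : Prop :=
  forall (Phi : S -> E) (w w' : valuation P),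
    (forall i, i \in D -> strict (pre [:: i] Phi) w w') -> strict (pre N Phi) w w'.

Lemma decisive_on_pairs_of_decisive : decisive B nabla N D -> decisive_on_pairs.
Proof.
move=> D_dec Phi e e' e2 D_miss; apply/inconsistent_andP => v vN ve'.
suff D_cons : consistent (bigAnd [seq B (nabla [:: i] Phi e) | i <- D]).
  exact: (inconsistent_andP _ _).1 (D_dec e e' Phi D_miss D_cons) v vN ve'.
have [ve _] := (nabla_maxE _ _ _ N_society).1 vN.
have outcome_other i u : i \in D -> sat u (B (nabla [:: i] Phi e)) ->
    u \in models (B e) /\ u != v.
  move=> iD ui; have [eu _] := (nabla_maxE _ _ _ (society1 i)).1 ui.
  split; first by rewrite inE.
  by apply: contraTneq ve' => uv; rewrite -uv; apply/negP;
    apply: (inconsistent_andP _ _).1 (D_miss i iD) u ui.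
apply/consistentP/existsP; case: D D_miss outcome_other => [|i0 D'] _ outcome_other.
  by exists v.
have [u ui0] := epistemic_sat B_space (nabla [:: i0] Phi e).
have [eu uv] := outcome_other i0 u (mem_head _ _) ui0.
exists u; rewrite sat_bigAnd all_map; apply/allP => i iD /=.
have [ui ui_i] := epistemic_sat B_space (nabla [:: i] Phi e).
have [eui uiv] := outcome_other i ui iD ui_i.
by rewrite (card_le2_eq e2 _ eu eui uv uiv) // inE.
Qed.

Lemma pareto_dominant_of_decisive_on_pairs : decisive_on_pairs -> pareto_dominant.
Proof.
move=> D_dec Phi w w' D_strict.
have [e eE] : exists e, forall v, sat v (B e) = sat v (FOr (charf w) (charf w')).
  by apply: (epistemic_realize B_space (w0 := w)); rewrite /= sat_charf eqxx.
have [e' e'E] : exists e', forall v, sat v (B e') = sat v (charf w').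
  by apply: (epistemic_realize B_space (w0 := w')); rewrite sat_charf eqxx.
have eE2 v : sat v (B e) = (v == w) || (v == w') by rewrite eE /= !sat_charf.
have e2 : #|models (B e)| <= 2.
  apply: leq_trans (_ : #|[set w; w']| <= 2); last by rewrite cards2; case: (w != w').
  by apply: subset_leq_card; apply/subsetP => v; rewrite !inE eE2.
have [_ [_ R_total]] := pre_total Phi N_society.
have w'_not_max : ~ in_max (B e) (pre N Phi) w'.
  move=> /(nabla_maxE _ _ _ N_society) w'N.
  have e'w' : sat w' (B e') by rewrite e'E sat_charf.
  have N_miss : entails (FAnd (B (nabla N Phi e)) (B e')) FBot.
    apply: D_dec e2 _ => i iD; apply/inconsistent_andP => v vi.
    rewrite e'E sat_charf => /eqP vw'; move: vi; rewrite vw'.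
    by move=> /(nabla_maxE _ _ _ (society1 i)) /(in_max_pair (pre_total Phi (society1 i)) eE2) /(D_strict i iD).2.
  exact: (inconsistent_andP _ _).1 N_miss w' w'N e'w'.
have not_w'w : ~ pre N Phi w' w.
  by move=> /(in_max_pair (pre_total Phi N_society) eE2).
by split=> //; case: (R_total w w') => // /not_w'w.
Qed.

Lemma decisive_of_pareto_dominant : pareto_dominant -> decisive B nabla N D.
Proof.
move=> D_pareto e e' Phi D_miss /consistentP/existsP [w0 w0D].
apply/inconsistent_andP => v /(nabla_maxE _ _ _ N_society) v_max ve'.
have [ve _] := v_max.
have w0_max i : i \in D -> in_max (B e) (pre [:: i] Phi) w0.
  by move=> iD; apply/(nabla_maxE _ _ _ (society1 i));
    move: w0D; rewrite sat_bigAnd all_map => /allP /(_ i iD).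
have w0_beats_v i : i \in D -> strict (pre [:: i] Phi) w0 v.
  move=> iD; apply: (strict_of_not_in_max (pre_total Phi (society1 i)) (w0_max i iD) ve).
  move=> /(nabla_maxE _ _ _ (society1 i)) vi.
  exact: (inconsistent_andP _ _).1 (D_miss i iD) v vi ve'.
have [D_nil | [i0 i0D]] : D = [::] \/ exists i0, i0 \in D.
  by case: D => [|i0 D']; [left | right; exists i0; rewrite mem_head].
- have [vv not_vv] : strict (pre N Phi) v v by apply: D_pareto; rewrite D_nil.
  exact: not_vv vv.
- have [_ not_vw0] := D_pareto Phi w0 v w0_beats_v.
  by apply/not_vw0/v_max.2; case: (w0_max i0 i0D).
Qed.

End Decisiveness.

Theorem mainTheorem15 (d : Order.disp_t) (S : orderType d) (P : finType) (E : Type)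
  (B : E -> form P) (nabla : seq S -> (S -> E) -> E -> E)
  (pre : seq S -> (S -> E) -> valuation P -> valuation P -> Prop)
  (N D : seq S) :
  well_founded (fun x y : S => (x < y)%O) ->
  epistemic_space B ->
  ES_basic_fusion B nabla ->
  representing_assignment B nabla pre ->
  society N ->
  coalition N D ->
  (decisive B nabla N D <->
     (forall (Phi : S -> E) (e e' : E), #|models (B e)| <= 2 ->
        (forall i, i \in D -> entails (FAnd (B (nabla [:: i] Phi e)) (B e')) FBot) ->
        entails (FAnd (B (nabla N Phi e)) (B e')) FBot)) /\
  (decisive B nabla N D <->
     (forall (Phi : S -> E) (w w' : valuation P),
        (forall i, i \in D -> strict (pre [:: i] Phi) w w') ->
        strict (pre N Phi) w w')).
Proof.
move=> _ B_space _ pre_rep N_society _.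
have i_ii := decisive_on_pairs_of_decisive B_space pre_rep N_society (D := D).
have ii_iii := pareto_dominant_of_decisive_on_pairs B_space pre_rep N_society (D := D).
have iii_i := decisive_of_pareto_dominant pre_rep N_society (D := D).
split; split.
- exact: i_ii.
- by move=> /ii_iii /iii_i.
- by move=> /i_ii /ii_iii.
- exact: iii_i.
Qed.
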